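(* Let $G$ be a group with a finite generating set $S$ not containing the identity $e$, and let $d_W$ and $d_C$ be the word metric and the cardinal metric on $G$ with respect to $S$. Then every isometry $T\colon (G,d_C)\to(G,d_W)$ is of the form $T=L_a\circ\tilde T$, where $a\in G$, $L_a\colon g\mapsto ag$, and $\tilde T\colon(G,d_C)\to(G,d_W)$ is an isometry with $\tilde T(e)=e$ and $\tilde T(S)\subseteq S\cup S^{-1}$. Furthermore, $\tilde T$ is a nonexpansive map on $(G,d_W)$, i.e. $d_W(\tilde T(g),\tilde T(h))\le d_W(g,h)$ for all $g,h\in G$.
   Context: The word metric: $d_W(g,g)=0$ and for $g\ne h$, $d_W(g,h)$ is the least $n\in\mathbb{N}$ such that $g^{-1}h=s_1^{\epsilon_1}\cdots s_n^{\epsilon_n}$ with $s_i\in S$, $\epsilon_i\in\{\pm1\}$. The cardinal norm is $\|g\| = \min\{|A| : A\subseteq S,\ g\in\langle A\rangle\}$, where $\langle A\rangle$ is the subgroup generated by $A$, and $d_C(g,h)=\|g^{-1}h\|$. An isometry here means a distance-preserving map $T$, i.e. $d_W(T(g),T(h))=d_C(g,h)$ for all $g,h$. *)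

From Stdlib Require Import List Arith ClassicalEpsilon.
Import ListNotations.

Record Group := {
  carrier :> Type;
  gmul : carrier -> carrier -> carrier;
  ginv : carrier -> carrier;
  gone : carrier;
  gmulA : forall x y z, gmul x (gmul y z) = gmul (gmul x y) z;
  gmul1 : forall x, gmul gone x = x;
  gmulV : forall x, gmul (ginv x) x = gone
}.

Arguments gmul {g} _ _.
Arguments ginv {g} _.
Arguments gone {g}.

(* least n with P n (meaningful when some n satisfies P; 0 otherwise irrelevant) *)
Definition least (P : nat -> Prop) : nat :=
  epsilon (inhabits 0) (fun n => P n /\ forall m, P m -> n <= m).

Section Metrics.
Variable G : Group.

Inductive gen (A : list G) : G -> Prop :=
| gen_one : gen A (@gone G)
| gen_base : forall a, In a A -> gen A a
| gen_mul : forall x y, gen A x -> gen A y -> gen A (gmul x y)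
| gen_inv : forall x, gen A x -> gen A (ginv x).

(* evaluation of a word: letters (s, true) = s, (s, false) = s^-1 *)
Definition eval_word (w : list (G * bool)) : G :=
  fold_right (fun (p : G * bool) (acc : carrier G) => gmul (if snd p then fst p else ginv (fst p)) acc) (@gone G) w.

Definition dW (S : list G) (g h : G) : nat :=
  least (fun n => exists w : list (G * bool),
           length w = n /\ Forall (fun p => In (fst p) S) w /\
           eval_word w = gmul (ginv g) h).

Definition cnorm (S : list G) (g : G) : nat :=
  least (fun n => exists A : list G,
           NoDup A /\ incl A S /\ length A = n /\ gen A g).

Definition dC (S : list G) (g h : G) : nat := cnorm S (gmul (ginv g) h).

End Metrics.

(* Left translations are isometries of d_W, so translating by T(e)^-1 normalises
   T to fix e.  A generator s has cardinal norm 1, hence its image lies at word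
   distance 1 from e, i.e. is a letter s' or s'^-1.  Finally d_C <= d_W, because
   the distinct letters of a shortest word for g^-1 h form a subset of S whose
   generated subgroup contains g^-1 h; so the normalised isometry is
   nonexpansive for d_W. *)

From Stdlib Require Import List Arith Lia Classical ClassicalEpsilon.
Import ListNotations.

Lemma least_spec (P : nat -> Prop) :
  (exists n, P n) -> P (least P) /\ forall m, P m -> least P <= m.
Proof.
  intros [n Pn]. unfold least.
  apply (epsilon_spec (inhabits 0) (fun k => P k /\ forall m, P m -> k <= m)).
  apply NNPP. intro no_least.
  assert (noP : forall k, ~ P k).
  { intro k. induction k as [k IH] using (well_founded_induction lt_wf).
    intro Pk. apply no_least. exists k. split; [exact Pk|].
    intros m Pm. destruct (le_lt_dec k m) as [le_km | lt_mk]; [exact le_km|].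
    exfalso. exact (IH m lt_mk Pm). }
  exact (noP n Pn).
Qed.

Lemma least_le (P : nat -> Prop) m : P m -> least P <= m.
Proof. intro Pm. apply (least_spec P (ex_intro _ m Pm)), Pm. Qed.

Lemma exists_NoDup_same_elements (T : Type) (l : list T) :
  exists A, NoDup A /\ (forall x, In x A <-> In x l).
Proof.
  set (eq_dec := fun x y : T => excluded_middle_informative (x = y)).
  exists (nodup eq_dec l). split; [apply NoDup_nodup | apply nodup_In].
Qed.

Section GroupFacts.
Variable G : Group.

Lemma gmulrV (x : G) : gmul x (ginv x) = gone.
Proof.
  set (y := gmul x (ginv x)).
  assert (yy : gmul y y = y).
  { unfold y. rewrite <- gmulA, (gmulA _ (ginv x) x), gmulV, gmul1. reflexivity. }
  rewrite <- (gmul1 _ y), <- (gmulV _ y) at 1. rewrite <- gmulA, yy. apply gmulV.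
Qed.

Lemma gmulr1 (x : G) : gmul x gone = x.
Proof. rewrite <- (gmulV _ x), gmulA, gmulrV, gmul1. reflexivity. Qed.

Lemma ginv_unique (a b : G) : gmul a b = gone -> a = ginv b.
Proof. intro ab. rewrite <- (gmulr1 a), <- (gmulrV b), gmulA, ab, gmul1. reflexivity. Qed.

Lemma ginvK (x : G) : ginv (ginv x) = x.
Proof. symmetry. apply ginv_unique, gmulrV. Qed.

Lemma ginvM (x y : G) : ginv (gmul x y) = gmul (ginv y) (ginv x).
Proof.
  symmetry. apply ginv_unique.
  rewrite <- gmulA, (gmulA _ (ginv x)), gmulV, gmul1. apply gmulV.
Qed.

Lemma ginv1 : ginv (@gone G) = gone.
Proof. symmetry. apply ginv_unique, gmul1. Qed.

Lemma gen_nil (x : G) : gen G [] x -> x = gone.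
Proof.
  induction 1 as [| a [] | x y _ -> _ -> | x _ ->].
  - reflexivity.
  - apply gmul1.
  - exact ginv1.
Qed.

End GroupFacts.

Section Words.
Variable G : Group.

Definition word_over (A : list G) (w : list (G * bool)) : Prop :=
  Forall (fun p => In (fst p) A) w.

Definition word_inv (w : list (G * bool)) : list (G * bool) :=
  rev (map (fun p => (fst p, negb (snd p))) w).

Lemma eval_word_app (w1 w2 : list (G * bool)) :
  eval_word G (w1 ++ w2) = gmul (eval_word G w1) (eval_word G w2).
Proof.
  induction w1 as [|p w IH]; simpl.
  - now rewrite gmul1.
  - now rewrite IH, gmulA.
Qed.

Lemma eval_word_inv (w : list (G * bool)) :
  eval_word G (word_inv w) = ginv (eval_word G w).
Proof.
  unfold word_inv. induction w as [|[s b] w IH]; simpl.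
  - symmetry. apply ginv1.
  - rewrite eval_word_app, IH, ginvM. simpl. rewrite gmulr1.
    destruct b; simpl; [reflexivity | now rewrite ginvK].
Qed.

Lemma word_over_inv (A : list G) w : word_over A w -> word_over A (word_inv w).
Proof.
  intro wA. apply Forall_rev, Forall_map. exact wA.
Qed.

Lemma gen_eval_word (A : list G) w : word_over A w -> gen G A (eval_word G w).
Proof.
  induction 1 as [|[s b] w sA _ IH]; simpl in *.
  - constructor.
  - apply gen_mul; [destruct b|exact IH].
    + now apply gen_base.
    + now apply gen_inv, gen_base.
Qed.

Lemma gen_word (A : list G) x : gen G A x -> exists w, word_over A w /\ eval_word G w = x.
Proof.
  induction 1 as [| a aA | x y _ [w1 [w1A <-]] _ [w2 [w2A <-]] | x _ [w [wA <-]]].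
  - exists []. split; [constructor | reflexivity].
  - exists [(a, true)]. split; [now repeat constructor | apply gmulr1].
  - exists (w1 ++ w2). split; [now apply Forall_app | apply eval_word_app].
  - exists (word_inv w). split; [now apply word_over_inv | apply eval_word_inv].
Qed.

End Words.

Arguments word_over {G}.

Section Metrics.
Variables (G : Group) (S : list G).
Hypothesis S_generates : forall g : G, gen G S g.

Lemma dW_spec (g h : G) :
  exists w, word_over S w /\ eval_word G w = gmul (ginv g) h /\ length w = dW G S g h.
Proof.
  destruct (gen_word G S _ (S_generates (gmul (ginv g) h))) as [w0 [w0S ev0]].
  destruct (least_spec (fun n => exists w, length w = n /\ word_over S w /\
                                  eval_word G w = gmul (ginv g) h))
    as [[w [len [wS ev]]] _].
  - now exists (length w0), w0.
  - now exists w.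
Qed.

Lemma dW_mull (a g h : G) : dW G S (gmul a g) (gmul a h) = dW G S g h.
Proof.
  unfold dW. rewrite ginvM, <- gmulA, (gmulA _ (ginv a)), gmulV, gmul1. reflexivity.
Qed.

Lemma dW1_letter (x : G) :
  dW G S gone x = 1 -> In x S \/ exists s, In s S /\ x = ginv s.
Proof.
  intro d1. destruct (dW_spec gone x) as [w [wS [ev len]]].
  rewrite ginv1, gmul1 in ev. rewrite d1 in len.
  destruct w as [|[s b] [|]]; try discriminate.
  inversion_clear wS as [|? ? sS]. simpl in ev, sS. rewrite gmulr1 in ev.
  destruct b; [left | right; exists s]; now subst.
Qed.

Lemma cnorm_generator (s : G) : In s S -> s <> gone -> cnorm G S s = 1.
Proof.
  intros sS s1.
  assert (single : exists A, NoDup A /\ incl A S /\ length A = 1 /\ gen G A s).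
  { exists [s]. repeat split.
    - repeat constructor. intros [].
    - now intros y [<-|[]].
    - now apply gen_base; left. }
  unfold cnorm.
  destruct (least_spec (fun n => exists A, NoDup A /\ incl A S /\ length A = n /\ gen G A s))
    as [[A [_ [_ [len As]]]] min]; [now exists 1|].
  specialize (min 1 single).
  destruct A as [|a A]; simpl in len.
  - now apply gen_nil in As.
  - lia.
Qed.

Lemma dC_le_dW (g h : G) : dC G S g h <= dW G S g h.
Proof.
  destruct (dW_spec g h) as [w [wS [ev <-]]].
  destruct (exists_NoDup_same_elements _ (map fst w)) as [A [nodupA sameA]].
  assert (AS : incl A S).
  { intros a aA. apply sameA, in_map_iff in aA. destruct aA as [p [<- pw]].
    exact (proj1 (Forall_forall _ w) wS p pw). }
  assert (wA : word_over A w).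
  { apply Forall_forall. intros p pw. apply sameA, in_map, pw. }
  apply (Nat.le_trans _ (length A)).
  - apply least_le. exists A. repeat split; [exact nodupA | exact AS |].
    rewrite <- ev. now apply gen_eval_word.
  - rewrite <- (length_map fst). apply NoDup_incl_length; [exact nodupA|].
    intros a aA. now apply sameA.
Qed.

End Metrics.

Theorem mainTheorem8 (G : Group) (S : list G)
  (HS : forall g : G, gen G S g)
  (He : ~ In (@gone G) S)
  (T : G -> G)
  (HT : forall g h : G, dW G S (T g) (T h) = dC G S g h) :
  exists (a : G) (Tt : G -> G),
    (forall g : G, T g = gmul a (Tt g)) /\
    (forall g h : G, dW G S (Tt g) (Tt h) = dC G S g h) /\
    Tt gone = gone /\
    (forall s : G, In s S ->
       In (Tt s) S \/ exists s' : G, In s' S /\ Tt s = ginv s') /\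
    (forall g h : G, dW G S (Tt g) (Tt h) <= dW G S g h).
Proof.
  set (a := T gone).
  set (Tt := fun g => gmul (ginv a) (T g)).
  assert (Tt_isometry : forall g h, dW G S (Tt g) (Tt h) = dC G S g h).
  { intros g h. unfold Tt. now rewrite dW_mull. }
  assert (Tt1 : Tt gone = gone) by apply gmulV.
  exists a, Tt. repeat split.
  - intro g. unfold Tt. now rewrite gmulA, gmulrV, gmul1.
  - exact Tt_isometry.
  - exact Tt1.
  - intros s sS. apply dW1_letter; [exact HS|].
    rewrite <- Tt1, Tt_isometry. unfold dC. rewrite ginv1, gmul1.
    apply cnorm_generator; [exact sS|]. intros ->. exact (He sS).
  - intros g h. rewrite Tt_isometry. now apply dC_le_dW.
Qed.
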